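(* Let $G$ and $H$ be finite groups with $|G| = |H| = N$. For a finite group $X$ and an integer $n \ge 1$, define \[ m_n(X) = \sum_{\chi_1,\dots,\chi_n \in \mathrm{Irr}(X)} \Big[1_X,\ \prod_{i=1}^{n} \chi_i\overline{\chi_i}\Big], \qquad r_n(X) = \sum_{\chi_1,\dots,\chi_n \in \mathrm{Irr}(X)} \Big[1_X,\ \prod_{i=1}^{n} \chi_i^{2}\Big], \] where the sums run over all $n$-tuples of irreducible complex characters (repetition allowed). (1) If $m_n(G) = m_n(H)$ for all $n = 1,2,\dots,N$, then for every positive integer $k$ the number of conjugacy classes of $G$ of size $k$ equals the number of conjugacy classes of $H$ of size $k$. (2) If $r_n(G) = r_n(H)$ for all $n = 1,2,\dots,N$, then for every positive integer $k$ the number of real conjugacy classes of $G$ of size $k$ equals the number of real conjugacy classes of $H$ of size $k$.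
   Context: For a finite group $X$, $\mathrm{Irr}(X)$ is the set of irreducible complex characters of $X$, $1_X$ is the trivial character, $\overline{\chi}$ is the complex conjugate character, and for class functions $\alpha,\beta$ on $X$, $[\alpha,\beta] = \frac{1}{|X|}\sum_{x\in X}\alpha(x)\overline{\beta(x)}$ is the usual inner product (so $[1_X,\theta]$ is the multiplicity of the trivial character in a character $\theta$). A conjugacy class $K$ of $X$ is real if $K = K^{-1} = \{x^{-1} : x \in K\}$. *)

From HB Require Import structures.
From mathcomp Require Import all_boot all_algebra all_fingroup all_solvable all_field all_character.
Set Implicit Arguments. Unset Strict Implicit. Unset Printing Implicit Defensive.
Import GRing.Theory Num.Theory.
Local Open Scope ring_scope.

Definition m_n (gT : finGroupType) (X : {group gT}) (n : nat) : algC :=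
  \sum_(t : {ffun 'I_n -> Iirr X})
     '[1, \prod_(i < n) ('chi_(t i) * ('chi_(t i))^*%CF)]_X.

Definition r_n (gT : finGroupType) (X : {group gT}) (n : nat) : algC :=
  \sum_(t : {ffun 'I_n -> Iirr X})
     '[1, \prod_(i < n) ('chi_(t i) ^+ 2)]_X.

Definition nclasses_of_size (gT : finGroupType) (X : {group gT}) (k : nat) : nat :=
  #|[set C in classes X | #|C| == k]|.

Definition nreal_classes_of_size (gT : finGroupType) (X : {group gT}) (k : nat) : nat :=
  #|[set C in classes X | (#|C| == k) && ((C^-1)%g == C)]|.

From mathcomp Require Import all_boot all_algebra all_fingroup all_solvable all_field all_character.
Set Implicit Arguments. Unset Strict Implicit. Unset Printing Implicit Defensive.
Import GRing.Theory Num.Theory.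

(* By the second orthogonality relation, m_n(X) = |X|^-1 sum_x |C_X(x)|^n and
   r_n(X) = |X|^-1 sum_(x real) |C_X(x)|^n.  Power sums of orders 1..N of a family of
   integers in [0, N] determine how many members take each nonzero value (a
   Vandermonde argument), and the elements x with |C_X(x)| = N / k are exactly those
   lying in classes of size k, k of them per class. *)

Section PowerSums.
Local Open Scope ring_scope.
Variable R : numDomainType.

(* Evaluate, against the weights d, the polynomial with roots 0, ..., M - 1 except v0:
   it has no constant term, and is nonzero exactly at v0. *)
Lemma power_sums_weights_eq0 (M : nat) (d : nat -> R) :
  (forall n, (0 < n < M)%N -> \sum_(v < M) d v * v%:R ^+ n = 0) ->
  forall v0, (0 < v0 < M)%N -> d v0 = 0.
Proof.
case: M => [|M] d_pow v0 /andP[v0_gt0 v0_lt]; first by [].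
set r := rem v0 (iota 0 M.+1).
set P := \prod_(w <- r) ('X - (w%:R : R)%:P).
have size_P : (size P <= M.+1)%N.
  by rewrite size_prod_XsubC size_rem ?size_iota // mem_iota.
have P_root w : (w < M.+1)%N -> w != v0 -> P.[w%:R] = 0.
  move=> w_lt w_v0; rewrite horner_prod; apply/eqP; rewrite prodf_seq_eq0.
  apply/hasP; exists w; last by rewrite /= hornerXsubC subrr.
  by rewrite mem_rem_uniq ?iota_uniq // inE mem_iota w_v0.
have P_v0 : P.[v0%:R] != 0.
  rewrite horner_prod prodf_seq_neq0; apply/allP => w.
  rewrite mem_rem_uniq ?iota_uniq // inE => /andP[w_v0 _] /=.
  by rewrite hornerXsubC subr_eq0 eqr_nat eq_sym.
have coef0_P : P`_0 = 0.
  by rewrite -horner_coef0; apply: (P_root 0); rewrite // eq_sym -lt0n.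
have dP : \sum_(v < M.+1) d v * P.[v%:R] = 0.
  under eq_bigr do rewrite (horner_coef_wide _ size_P) mulr_sumr.
  rewrite exchange_big /= big_ord_recl /= coef0_P.
  under eq_bigr do rewrite mul0r mulr0.
  rewrite big1_eq add0r big1 // => i _.
  under eq_bigr do rewrite mulrCA.
  by rewrite -mulr_sumr d_pow ?mulr0 // /bump leq0n add1n ltnS leq0n ltnS ltn_ord.
move: dP; rewrite (bigD1 (Ordinal v0_lt)) //= big1 ?addr0 => [|w w_v0].
  by move/eqP; rewrite mulf_eq0 (negPf P_v0) orbF => /eqP.
by rewrite P_root ?mulr0 // -(inj_eq val_inj).
Qed.

Lemma sum_by_fibers (T : finType) (A : {set T}) (a : T -> nat) (F : nat -> R) M :
  {in A, forall x, (a x < M)%N} ->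
  \sum_(x in A) F (a x) = \sum_(v < M) #|[set x in A | a x == v]|%:R * F v.
Proof.
case: M => [|M] a_lt; first by rewrite big1 ?big_ord0 // => x /a_lt.
rewrite (partition_big (fun x => inord (a x) : 'I_M.+1) xpredT) //=.
apply: eq_bigr => v _; rewrite mulr_natl -sumr_const.
apply: eq_big => [x | x].
  by rewrite inE; case xA: (x \in A); rewrite //= -(inj_eq val_inj) /= inordK ?a_lt.
by case/andP=> xA /eqP <-; rewrite inordK ?a_lt.
Qed.

Lemma eq_card_fibers_of_power_sums (T U : finType) (A : {set T}) (B : {set U})
    (a : T -> nat) (b : U -> nat) M :
  {in A, forall x, (a x < M)%N} -> {in B, forall y, (b y < M)%N} ->
  (forall n, (0 < n < M)%N ->
     \sum_(x in A) (a x)%:R ^+ n = \sum_(y in B) (b y)%:R ^+ n :> R) ->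
  forall v, (0 < v < M)%N -> #|[set x in A | a x == v]| = #|[set y in B | b y == v]|.
Proof.
move=> a_lt b_lt eq_pow v v_bd; apply/eqP; rewrite -(eqr_nat R) -subr_eq0; apply/eqP.
pose d w := #|[set x in A | a x == w]|%:R - #|[set y in B | b y == w]|%:R : R.
apply: (@power_sums_weights_eq0 M d) v_bd => n n_bd.
have /eqP := eq_pow n n_bd.
rewrite (sum_by_fibers (fun w => w%:R ^+ n) a_lt).
rewrite (sum_by_fibers (fun w => w%:R ^+ n) b_lt).
rewrite -subr_eq0 -sumrB => /eqP; apply: etrans.
by apply: eq_bigr => w _; rewrite mulrBl.
Qed.

End PowerSums.

Section CharacterSums.
Local Open Scope ring_scope.
Variables (gT : finGroupType) (G : {group gT}).

Lemma sum_cfdot1_prod_tuples (f : Iirr G -> 'CF(G)) n :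
  \sum_(t : {ffun 'I_n -> Iirr G}) '[1, \prod_(i < n) f (t i)]
    = #|G|%:R^-1 * \sum_(x in G) ((\sum_j f j x) ^+ n)^*.
Proof.
under eq_bigr do rewrite cfdotE.
rewrite -mulr_sumr exchange_big /=; congr (_ * _); apply: eq_bigr => x xG.
under eq_bigr do rewrite cfun1E xG mul1r prod_cfunE //.
by rewrite -rmorph_sum -(bigA_distr_bigA (fun _ j => f j x)) prodr_const card_ord.
Qed.

Definition centralizer_weight (b : pred gT) (x : gT) : nat :=
  if b x then #|'C_G[x]%g| else 0.

Definition real_elt : pred gT := fun x => x \in (x^-1 ^: G)%g.

Lemma m_nE n :
  m_n G n = #|G|%:R^-1 * \sum_(x in G) (centralizer_weight predT x)%:R ^+ n.
Proof.
rewrite /m_n (sum_cfdot1_prod_tuples (fun j => 'chi_j * ('chi_j)^*%CF)).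
congr (_ * _); apply: eq_bigr => x xG.
under eq_bigr do rewrite !cfunE.
by rewrite second_orthogonality_relation // class_refl mulr1n rmorphXn /= conjC_nat.
Qed.

Lemma r_nE n :
  r_n G n = #|G|%:R^-1 * \sum_(x in G) (centralizer_weight real_elt x)%:R ^+ n.
Proof.
rewrite /r_n (sum_cfdot1_prod_tuples (fun j => 'chi_j ^+ 2)%CF).
congr (_ * _); apply: eq_bigr => x xG.
have -> : \sum_(j : Iirr G) ('chi_j ^+ 2)%CF x
          = \sum_(j : Iirr G) 'chi_j x * ('chi_j (x^-1)%g)^*.
  by apply: eq_bigr => j _; rewrite expr2 cfunE char_inv ?irr_char // conjCK.
rewrite second_orthogonality_relation ?groupV // /centralizer_weight /real_elt.
by case: (x \in _); rewrite ?mulr1n ?mulr0n rmorphXn /= ?rmorph0 ?conjC_nat.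
Qed.

End CharacterSums.

Section ClassSizes.
Local Open Scope group_scope.
Variables (gT : finGroupType) (G : {group gT}).

Lemma card_classes_of_size_mul k (Q : {set gT} -> bool) :
  (#|[set C in classes G | (#|C| == k) && Q C]| * k =
   #|[set x in G | (#|x ^: G| == k) && Q (x ^: G)]|)%N.
Proof.
set S := [set C in classes G | _].
have sSG : S \subset classes G by apply/subsetP => C; rewrite inE => /andP[].
have tiS : trivIset S by apply: trivIsetS sSG _; case/and3P: (classes_partition G).
have coverS : cover S = [set x in G | (#|x ^: G| == k) && Q (x ^: G)].
  apply/setP => x; rewrite inE; apply/bigcupP/andP => [[C] | [xG xk]].
    rewrite inE => /andP[/imsetP[y yG ->] yk] xy.
    have xG : x \in G by case/imsetP: xy => z zG ->; rewrite groupJ.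
    by rewrite (class_eqP xy).
  by exists (x ^: G); rewrite ?class_refl // inE mem_classes.
rewrite -coverS -(eqP tiS) -sum_nat_const; apply: eq_bigr => C.
by rewrite inE => /andP[_ /andP[/eqP]].
Qed.

Lemma card_class_size_elts k (b : pred gT) :
  (0 < k)%N ->
  #|[set x in G | (#|x ^: G| == k) && b x]| =
  if k %| #|G| then #|[set x in G | centralizer_weight G b x == #|G| %/ k]| else 0%N.
Proof.
move=> k_gt0; have G_gt0 := cardG_gt0 G.
have cardG x : x \in G -> #|G| = (#|x ^: G| * #|'C_G[x]|)%N.
  by move=> xG; rewrite -index_cent1 mulnC Lagrange // subsetIl.
case: ifP => [kG | kG_F].
  have Gk_gt0 : (0 < #|G| %/ k)%N by rewrite divn_gt0 // dvdn_leq.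
  apply: eq_card => x; rewrite !inE /centralizer_weight.
  case xG: (x \in G) => //=; case: (b x); last by rewrite andbF eq_sym gtn_eqF.
  have C_gt0 : (0 < #|'C_G[x]|)%N by rewrite cardG_gt0.
  rewrite andbT; apply/eqP/eqP => [xk | eqC]; first by rewrite (cardG x xG) xk mulKn.
  by apply/eqP; rewrite -(eqn_pmul2r C_gt0) -(cardG x xG) eqC mulnC divnK.
apply/eqP; rewrite cards_eq0; apply/eqP/setP => x; rewrite !inE.
case xG: (x \in G) => //=; apply/negP => /andP[/eqP xk _].
by move: kG_F; rewrite (cardG x xG) xk dvdn_mulr.
Qed.

Lemma classV_eq_class x : ((x ^: G)^-1 == x ^: G) = real_elt G x.
Proof. by rewrite -classVg eq_sym; apply/eqP/class_eqP. Qed.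

End ClassSizes.

Lemma eq_card_class_size_of_power_sums (gT hT : finGroupType)
    (G : {group gT}) (H : {group hT}) (bG : pred gT) (bH : pred hT) :
  #|G| = #|H| ->
  (forall n, 1 <= n <= #|G| ->
     (#|G|%:R^-1 * \sum_(x in G) (centralizer_weight G bG x)%:R ^+ n
      = #|H|%:R^-1 * \sum_(y in H) (centralizer_weight H bH y)%:R ^+ n :> algC)%R) ->
  forall k, 0 < k ->
  #|[set x in G | (#|(x ^: G)%g| == k) && bG x]| =
  #|[set y in H | (#|(y ^: H)%g| == k) && bH y]|.
Proof.
move=> GH eq_pow k k_gt0; rewrite !card_class_size_elts // -GH.
case: ifP => // kG.
have weight_lt (fT : finGroupType) (K : {group fT}) b :
    {in K, forall x, centralizer_weight K b x < #|K|.+1}.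
  move=> x _; rewrite /centralizer_weight ltnS.
  by case: (b x); rewrite ?subset_leq_card ?subsetIl.
apply: (@eq_card_fibers_of_power_sums algC _ _ _ _ _ _ _ (weight_lt _ G bG)).
- by rewrite GH; apply: weight_lt.
- move=> n n_bd; apply: (@mulfI _ (#|G|%:R^-1)%R); last by rewrite {2}GH eq_pow.
  by rewrite invr_eq0 pnatr_eq0 -lt0n cardG_gt0.
- by rewrite divn_gt0 // dvdn_leq // ltnS leq_div.
Qed.

Theorem theorem3 (gT hT : finGroupType) (G : {group gT}) (H : {group hT}) :
  #|G| = #|H| ->
  ((forall n : nat, 1 <= n <= #|G| -> m_n G n = m_n H n) ->
     forall k : nat, 0 < k -> nclasses_of_size G k = nclasses_of_size H k)
  /\
  ((forall n : nat, 1 <= n <= #|G| -> r_n G n = r_n H n) ->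
     forall k : nat, 0 < k -> nreal_classes_of_size G k = nreal_classes_of_size H k).
Proof.
move=> GH; split=> eq_pow k k_gt0; apply/eqP; rewrite -(eqn_pmul2r k_gt0); apply/eqP.
  have nclassesE (fT : finGroupType) (K : {group fT}) :
      nclasses_of_size K k = #|[set C in classes K | (#|C| == k) && predT C]|.
    by apply: eq_card => C; rewrite !inE andbT.
  rewrite !nclassesE !card_classes_of_size_mul.
  by apply: eq_card_class_size_of_power_sums => // n /eq_pow; rewrite !m_nE.
rewrite /nreal_classes_of_size !card_classes_of_size_mul.
have realE (fT : finGroupType) (K : {group fT}) :
    [set x in K | (#|x ^: K| == k) && ((x ^: K)^-1 == x ^: K)]%g =
    [set x in K | (#|x ^: K| == k) && real_elt K x]%g.
  by apply/setP => x; rewrite !inE classV_eq_class.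
rewrite !realE.
by apply: eq_card_class_size_of_power_sums => // n /eq_pow; rewrite !r_nE.
Qed.
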